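(* Let $k$ be a commutative ring containing $1/2$ and let $R$ be a smooth commutative $k$-algebra such that $\mathrm{Der}_k(R)$ is free with a basis $\tau_1,\dots,\tau_n$ of pairwise commuting derivations, with dual basis $\omega_1,\dots,\omega_n$ of $\Omega^1_{R/k}$ (so $df=\sum_r\tau_r(f)\omega_r$). Let $g=(g^{ij}),g'=(g'^{ij})\in GL_n(R)$ be such that $\tau'_i=g^{ij}\tau_j$ pairwise commute and $\tau''_i=g'^{ij}\tau'_j$ pairwise commute; let $(\omega'_i)$, $(\omega''_i)$ be the bases of $\Omega^1_{R/k}$ dual to $(\tau'_i)$, $(\tau''_i)$. Let $A,A'\in GL_m(R)$. For a basis $(\sigma_i)$ of commuting derivations, $G\in GL_n(R)$ and $B\in GL_m(R)$ define (summation over repeated indices) $$G^{i\alpha\gamma}(\sigma;G,B)=G^{iq}\sigma_q\big((B^{-1})^{\alpha\mu}\big)B^{\mu\gamma},$$ $$H^{ij}(\sigma;G,B)=\sigma_j\big(G^{i\nu\nu}(\sigma;G,B)\big)+\tfrac12 G^{iq}\sigma_j\big((B^{-1})^{\mu\beta}\big)B^{\beta\gamma}\sigma_q\big((B^{-1})^{\gamma\nu}\big)B^{\nu\mu}.$$ Put $h^{ij}=H^{ij}(\tau;g,A)$, $h'^{ij}=H^{ij}(\tau';g',A')$, $h''^{ij}=H^{ij}(\tau;g'g,A'A)$, $g^{p\mu\mu}=G^{p\mu\mu}(\tau;g,A)$, $g'^{i\alpha\gamma}=G^{i\alpha\gamma}(\tau';g',A')$, and define for each $i$ the $1$-form $$\mathfrak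 a_i=g'^{ip}h^{pr}\omega_r+g^{p\mu\mu}\,dg'^{ip}+g'^{i\alpha\gamma}A^{\gamma\beta}\,d\big((A^{-1})^{\beta\alpha}\big)+h'^{ip}\omega'_p-h''^{ir}\omega_r.$$ Then $$\mathfrak a_i=\tfrac12\,\mathrm{tr}\big\{A'^{-1}\tau''_i(A')\,\tau''_r(A)A^{-1}-A'^{-1}\tau''_r(A')\,\tau''_i(A)A^{-1}\big\}\,\omega''_r.$$
   Context: $(B^{-1})^{\alpha\beta}$ is the $(\alpha,\beta)$ entry of $B^{-1}$; $\tau(A)$ for a matrix $A$ means entrywise application of the derivation $\tau$. Repeated indices are summed. *)

From HB Require Import structures.
From mathcomp Require Import all_boot all_order all_algebra.
Set Implicit Arguments. Unset Strict Implicit. Unset Printing Implicit Defensive.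
Import Order.TTheory GRing.Theory Num.Theory.
Local Open Scope ring_scope.

Section Defs.
Variables (k : comUnitRingType) (R : comUnitAlgType k).

Definition is_der (D : R -> R) : Prop :=
  [/\ forall x y, D (x + y) = D x + D y,
      forall x y, D (x * y) = D x * y + x * D y
    & forall (a : k) x, D (a *: x) = a *: D x].

Definition is_der_mod (M : lmodType R) (delta : R -> M) : Prop :=
  [/\ forall x y, delta (x + y) = delta x + delta y,
      forall x y, delta (x * y) = x *: delta y + y *: delta x
    & forall (a : k) x, delta (a *: x) = (a%:A : R) *: delta x].

Definition Rlinear (M N : lmodType R) (phi : M -> N) : Prop :=
  forall (a : R) u v, phi (a *: u + v) = a *: phi u + phi v.

(** (Omega, d) is the module of Kahler differentials Omega^1_{R/k}:
    d is a k-derivation, universal among k-derivations into R-modules. *)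
Definition is_kahler (Omega : lmodType R) (d : R -> Omega) : Prop :=
  is_der_mod d /\
  forall (M : lmodType R) (delta : R -> M), is_der_mod delta ->
    (exists phi : Omega -> M, Rlinear phi /\ forall x, phi (d x) = delta x) /\
    (forall phi1 phi2 : Omega -> M, Rlinear phi1 -> Rlinear phi2 ->
       (forall x, phi1 (d x) = phi2 (d x)) -> forall v, phi1 v = phi2 v).

Definition der_basis (n : nat) (tau : 'I_n -> R -> R) : Prop :=
  [/\ forall j, is_der (tau j),
      forall D, is_der D -> exists c : 'I_n -> R, forall x, D x = \sum_j c j * tau j x
    & forall c : 'I_n -> R, (forall x, \sum_j c j * tau j x = 0) -> forall j, c j = 0].

Definition commuting (n : nat) (tau : 'I_n -> R -> R) : Prop :=
  forall i j x, tau i (tau j x) = tau j (tau i x).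

Definition mod_basis (Omega : lmodType R) (n : nat) (omega : 'I_n -> Omega) : Prop :=
  (forall v, exists c : 'I_n -> R, v = \sum_r c r *: omega r) /\
  (forall c : 'I_n -> R, \sum_r c r *: omega r = 0 -> forall r, c r = 0).

(** omega is the basis of Omega^1 dual to the derivation basis tau:
    omega is a basis and df = sum_r tau_r(f) omega_r
    (equivalently <tau_i, omega_j> = delta_ij under Der = Hom(Omega^1, R)). *)
Definition dual_basis (Omega : lmodType R) (d : R -> Omega) (n : nat)
    (tau : 'I_n -> R -> R) (omega : 'I_n -> Omega) : Prop :=
  mod_basis omega /\ forall f, d f = \sum_r tau r f *: omega r.

Definition der_change (n : nat) (G : 'M[R]_n) (tau : 'I_n -> R -> R) : 'I_n -> R -> R :=
  fun i x => \sum_j G i j * tau j x.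

Definition Gcoef (n m : nat) (sigma : 'I_n -> R -> R) (G : 'M[R]_n) (B : 'M[R]_m)
    (i : 'I_n) (al ga : 'I_m) : R :=
  \sum_(q < n) \sum_(mu < m) G i q * sigma q (invmx B al mu) * B mu ga.

Definition Hcoef (n m : nat) (sigma : 'I_n -> R -> R) (G : 'M[R]_n) (B : 'M[R]_m)
    (i j : 'I_n) : R :=
  sigma j (\sum_(nu < m) Gcoef sigma G B i nu nu)
  + (2%:R)^-1 * \sum_(q < n) \sum_(mu < m) \sum_(be < m) \sum_(ga < m) \sum_(nu < m)
      G i q * sigma j (invmx B mu be) * B be ga * sigma q (invmx B ga nu) * B nu mu.

End Defs.

(* Write logder D B := D(B^-1) B = - B^-1 D(B).  The coefficients of the statement are
   G(sigma; G, B)^i = logder sigma'_i B and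
   H^ij(sigma; G, B) = sigma_j (tr logder sigma'_i B)
                       + 1/2 tr (logder sigma_j B * logder sigma'_i B),
   where sigma'_i = G^iq sigma_q.  This is linear in sigma_j, and the Leibniz rule in
   sigma'_i produces exactly the term g^pmumu dg'^ip.  The dual frames are determined by
   df = tau_r(f) omega_r since the tau_r are free, so every 1-form can be expanded in the
   frame omega''.  The coefficient of omega''_r then reduces to the defect of
   B |-> H(tau''_r, tau''_i; B) on the product A'A, computed from
   logder D (A'A) = A^-1 (logder D A') A + logder D A: everything cancels except half of
   the cross terms, which give the trace on the right-hand side. *)

From HB Require Import structures.
From mathcomp Require Import all_boot all_order all_algebra ring.
From Stdlib Require Import FunctionalExtensionality.
Import Order.TTheory GRing.Theory Num.Theory.
Local Open Scope ring_scope.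
Set Implicit Arguments. Unset Strict Implicit. Unset Printing Implicit Defensive.

Section Derivations.
Variables (k : comUnitRingType) (R : comUnitAlgType k).
Implicit Types (D E : R -> R) (n m : nat).

Lemma derD D : is_der D -> forall x y, D (x + y) = D x + D y.
Proof. by case. Qed.

Lemma derM D : is_der D -> forall x y, D (x * y) = D x * y + x * D y.
Proof. by case. Qed.

Lemma der0 D : is_der D -> D 0 = 0.
Proof. by move=> /derD hD; apply: (addrI (D 0)); rewrite -hD !addr0. Qed.

Lemma der1 D : is_der D -> D 1 = 0.
Proof.
move=> /derM hD; have := hD 1 1; rewrite !mulr1 mul1r => e.
by apply: (addrI (D 1)); rewrite -e addr0.
Qed.

Lemma der_sum D (I : Type) (r : seq I) (P : pred I) (F : I -> R) :
  is_der D -> D (\sum_(i <- r | P i) F i) = \sum_(i <- r | P i) D (F i).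
Proof. by move=> hD; elim/big_rec2: _ => [|i y1 y2 _ <-]; rewrite ?der0 ?derD. Qed.

Definition der_free n (s : 'I_n -> R -> R) : Prop :=
  forall c : 'I_n -> R, (forall x, \sum_j c j * s j x = 0) -> forall j, c j = 0.

Lemma is_der_change n (G : 'M[R]_n) (s : 'I_n -> R -> R) i :
  (forall j, is_der (s j)) -> is_der (der_change G s i).
Proof.
move=> s_der; rewrite /der_change; split=> [x y|x y|a x].
- by rewrite -big_split; apply: eq_bigr => j _; rewrite derD // mulrDr.
- rewrite big_distrl big_distrr -big_split; apply: eq_bigr => j _ /=.
  by rewrite derM // mulrDr mulrA mulrCA.
- by rewrite scaler_sumr; apply: eq_bigr => j _; case: (s_der j) => _ _ ->; rewrite scalerAr.
Qed.

Lemma der_change_mul n (G G' : 'M[R]_n) (s : 'I_n -> R -> R) :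
  der_change G' (der_change G s) = der_change (G' *m G) s.
Proof.
apply: functional_extensionality => i; apply: functional_extensionality => x.
rewrite /der_change; under eq_bigr => q _ do rewrite mulr_sumr.
rewrite exchange_big; apply: eq_bigr => p _; rewrite mxE big_distrl.
by apply: eq_bigr => q _; rewrite mulrA.
Qed.

Lemma der_change_free n (G : 'M[R]_n) (s : 'I_n -> R -> R) :
  G \in unitmx -> der_free s -> der_free (der_change G s).
Proof.
move=> G_unit s_free c hc.
have cG0 : (\row_p c p) *m G = 0.
  apply/rowP => j; rewrite !mxE; under eq_bigr => p _ do rewrite mxE.
  apply: (s_free (fun j => \sum_p c p * G p j)) => x {j}; rewrite -[RHS](hc x).
  rewrite /der_change; under [RHS]eq_bigr => p _ do rewrite mulr_sumr.
  rewrite [RHS]exchange_big; apply: eq_bigr => j _; rewrite mulr_suml.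
  by apply: eq_bigr => p _; rewrite mulrA.
move=> j; have := congr1 (mulmx^~ (invmx G)) cG0.
by rewrite mul0mx -mulmxA mulmxV // mulmx1 => /rowP /(_ j); rewrite !mxE.
Qed.

Lemma map_mx_derM D m1 m2 m3 (X : 'M[R]_(m1, m2)) (Y : 'M[R]_(m2, m3)) :
  is_der D -> map_mx D (X *m Y) = map_mx D X *m Y + X *m map_mx D Y.
Proof.
move=> hD; apply/matrixP => i j; rewrite !mxE der_sum // -big_split.
by apply: eq_bigr => l _; rewrite derM // !mxE.
Qed.

Lemma map_mx_der_invmx D m (B : 'M[R]_m) : is_der D -> B \in unitmx ->
  map_mx D (invmx B) = - (invmx B *m map_mx D B *m invmx B).
Proof.
move=> hD B_unit; apply/eqP; rewrite -addr_eq0.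
rewrite -[map_mx D (invmx B)]mul1mx -(mulVmx B_unit) -!mulmxA -mulmxDr addrC.
have -> : map_mx D B *m invmx B + B *m map_mx D (invmx B) = 0.
  rewrite -map_mx_derM // mulmxV //; apply/matrixP => i j; rewrite !mxE.
  by case: (i == j); rewrite ?der1 ?der0.
by rewrite mulmx0.
Qed.

Lemma map_mx_der_change n m (G : 'M[R]_n) (s : 'I_n -> R -> R) i (M : 'M[R]_m) :
  map_mx (der_change G s i) M = \sum_j G i j *: map_mx (s j) M.
Proof. by apply/matrixP => a b; rewrite !mxE summxE; apply: eq_bigr => j _; rewrite !mxE. Qed.

Lemma invmx_mul m (A' A : 'M[R]_m) : A' \in unitmx -> A \in unitmx ->
  invmx (A' *m A) = invmx A *m invmx A'.
Proof.
move=> A'_unit A_unit; have AA'_unit : A' *m A \in unitmx by rewrite unitmx_mul A'_unit.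
have inv_r : A' *m A *m (invmx A *m invmx A') = 1%:M.
  by rewrite mulmxA -(mulmxA A') mulmxV // mulmx1 mulmxV.
by rewrite -[LHS]mulmx1 -inv_r mulmxA mulVmx // mul1mx.
Qed.

Definition logder D m (B : 'M[R]_m) : 'M[R]_m := map_mx D (invmx B) *m B.

Lemma logderE D m (B : 'M[R]_m) : is_der D -> B \in unitmx ->
  logder D B = - (invmx B *m map_mx D B).
Proof.
move=> hD B_unit; rewrite /logder map_mx_der_invmx // mulNmx.
by rewrite -(mulmxA _ (invmx B)) mulVmx ?mulmx1.
Qed.

Lemma logder_change n m (G : 'M[R]_n) (s : 'I_n -> R -> R) i (B : 'M[R]_m) :
  logder (der_change G s i) B = \sum_j G i j *: logder (s j) B.
Proof.
by rewrite /logder map_mx_der_change mulmx_suml; apply: eq_bigr => j _; rewrite scalemxAl.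
Qed.

Lemma logder_mul D m (A' A : 'M[R]_m) : is_der D -> A' \in unitmx -> A \in unitmx ->
  logder D (A' *m A) = invmx A *m logder D A' *m A + logder D A.
Proof.
move=> hD A'_unit A_unit; have AA'_unit : A' *m A \in unitmx by rewrite unitmx_mul A'_unit.
rewrite !logderE // invmx_mul // map_mx_derM // mulmxDr opprD mulmxN mulNmx !mulmxA.
by rewrite -(mulmxA (invmx A) (invmx A') A') mulVmx // mulmx1.
Qed.

Lemma mxtrace_logder_mul D m (A' A : 'M[R]_m) : is_der D -> A' \in unitmx -> A \in unitmx ->
  \tr (logder D (A' *m A)) = \tr (logder D A') + \tr (logder D A).
Proof.
move=> hD A'_unit A_unit; rewrite logder_mul // mxtraceD mxtrace_mulC mulmxA.
by rewrite mulmxV // mul1mx.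
Qed.

Lemma Gcoef_logder n m (s : 'I_n -> R -> R) (G : 'M[R]_n) (B : 'M[R]_m) i al ga :
  Gcoef s G B i al ga = logder (der_change G s i) B al ga.
Proof.
rewrite /Gcoef /logder mxE exchange_big; apply: eq_bigr => mu _.
by rewrite !mxE big_distrl.
Qed.

Lemma Gcoef_trace n m (s : 'I_n -> R -> R) (G : 'M[R]_n) (B : 'M[R]_m) i :
  \sum_(nu < m) Gcoef s G B i nu nu = \tr (logder (der_change G s i) B).
Proof. by apply: eq_bigr => nu _; rewrite Gcoef_logder. Qed.

Definition Hform D E m (B : 'M[R]_m) : R :=
  D (\tr (logder E B)) + 2%:R^-1 * \tr (logder D B *m logder E B).

Lemma Hcoef_Hform n m (s : 'I_n -> R -> R) (G : 'M[R]_n) (B : 'M[R]_m) i j :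
  Hcoef s G B i j = Hform (s j) (der_change G s i) B.
Proof.
rewrite /Hcoef /Hform Gcoef_trace; congr (_ + _ * _).
rewrite exchange_big /mxtrace; apply: eq_bigr => mu _; rewrite mxE.
transitivity (\sum_(be < m) \sum_(ga < m) \sum_(q < n) \sum_(nu < m)
   s j (invmx B mu be) * B be ga * (G i q * s q (invmx B ga nu) * B nu mu)).
  rewrite exchange_big; apply: eq_bigr => be _; rewrite exchange_big.
  by apply: eq_bigr => ga _; apply: eq_bigr => q _; apply: eq_bigr => nu _; ring.
rewrite exchange_big; apply: eq_bigr => ga _.
rewrite -Gcoef_logder /Gcoef /logder mxE big_distrl.
by apply: eq_bigr => be _; rewrite mxE big_distrr; apply: eq_bigr => q _; rewrite big_distrr.
Qed.

Lemma Hform_changel n m (G : 'M[R]_n) (s : 'I_n -> R -> R) t E (B : 'M[R]_m) :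
  \sum_j G t j * Hform (s j) E B = Hform (der_change G s t) E B.
Proof.
rewrite /Hform logder_change mulmx_suml raddf_sum mulr_sumr /der_change -big_split.
by apply: eq_bigr => j _; rewrite -scalemxAl /= mxtraceZ; ring.
Qed.

Lemma Hform_changer D n m (G : 'M[R]_n) (s : 'I_n -> R -> R) i (B : 'M[R]_m) :
  is_der D ->
  \sum_p (G i p * Hform D (s p) B + \tr (logder (s p) B) * D (G i p))
  = Hform D (der_change G s i) B.
Proof.
move=> hD; rewrite /Hform logder_change mulmx_sumr !raddf_sum der_sum // mulr_sumr.
rewrite -big_split; apply: eq_bigr => p _.
by rewrite -scalemxAr /= !mxtraceZ (derM hD); ring.
Qed.

Lemma Hform_mul D E m (A' A : 'M[R]_m) :
  is_der D -> is_der E -> A' \in unitmx -> A \in unitmx ->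
  Hform D E (A' *m A) = Hform D E A' + Hform D E A
    + 2%:R^-1 * (\tr (invmx A *m logder D A' *m A *m logder E A)
                 + \tr (logder D A *m invmx A *m logder E A' *m A)).
Proof.
move=> hD hE A'_unit A_unit.
have conj_tr M : \tr (invmx A *m M *m A) = \tr M.
  by rewrite mxtrace_mulC mulmxA mulmxV // mul1mx.
rewrite /Hform mxtrace_logder_mul // (derD hD) !logder_mul //.
move: (logder D A') (logder E A') (logder D A) (logder E A) => X Y a b.
rewrite mulmxDl !mulmxDr !mxtraceD !mulmxA.
rewrite -(mulmxA _ A (invmx A)) mulmxV // mulmx1 -(mulmxA (invmx A) X Y) conj_tr.
by ring.
Qed.

Lemma Hform_cocycle_defect D E m (A' A : 'M[R]_m) :
  (2%:R : R) \is a GRing.unit -> is_der D -> is_der E -> A' \in unitmx -> A \in unitmx ->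
  Hform D E A + \tr (logder E A' *m A *m map_mx D (invmx A)) + Hform D E A'
    - Hform D E (A' *m A)
  = 2%:R^-1 * \tr (invmx A' *m map_mx E A' *m map_mx D A *m invmx A
                   - invmx A' *m map_mx D A' *m map_mx E A *m invmx A).
Proof.
move=> two_unit hD hE A'_unit A_unit; rewrite Hform_mul //.
set x := \tr (logder D A *m _ *m _ *m A); set y := \tr (invmx A *m _ *m A *m _).
have cross : \tr (logder E A' *m A *m map_mx D (invmx A)) = 2%:R * 2%:R^-1 * x.
  have -> : map_mx D (invmx A) = logder D A *m invmx A.
    by rewrite /logder -mulmxA mulmxV // mulmx1.
  by rewrite mulrV // mul1r mxtrace_mulC (mulmxA (logder D A *m invmx A)).
have x_tr : \tr (invmx A' *m map_mx E A' *m map_mx D A *m invmx A) = x.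
  rewrite /x !logderE // !(mulNmx, mulmxN, opprK) !mulmxA.
  rewrite [RHS]mxtrace_mulC !mulmxA mulmxV // mul1mx.
  by rewrite [LHS]mxtrace_mulC !mulmxA [LHS]mxtrace_mulC !mulmxA.
have y_tr : \tr (invmx A' *m map_mx D A' *m map_mx E A *m invmx A) = y.
  rewrite /y !logderE // !(mulNmx, mulmxN, opprK) !mulmxA.
  rewrite -(mulmxA _ A (invmx A)) mulmxV // mulmx1.
  by rewrite [LHS]mxtrace_mulC !mulmxA.
by rewrite cross raddfB /= x_tr y_tr; ring.
Qed.

End Derivations.

Section DualBases.
Variables (k : comUnitRingType) (R : comUnitAlgType k).
Variables (Omega : lmodType R) (d : R -> Omega) (n : nat).

Lemma sum_scale_comb (w : 'I_n -> Omega) (I : finType) (c : I -> R) (e : I -> 'I_n -> R) :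
  \sum_(x : I) c x *: \sum_(t < n) e x t *: w t = \sum_(t < n) (\sum_(x : I) c x * e x t) *: w t.
Proof.
under eq_bigr => x _ do rewrite scaler_sumr.
rewrite exchange_big; apply: eq_bigr => t _.
by rewrite scaler_suml; apply: eq_bigr => x _; rewrite scalerA.
Qed.

Lemma sum_comb (w : 'I_n -> Omega) (I : finType) (f : I -> 'I_n -> R) :
  \sum_(x : I) \sum_(t < n) f x t *: w t = \sum_(t < n) (\sum_(x : I) f x t) *: w t.
Proof. by rewrite exchange_big; apply: eq_bigr => t _; rewrite scaler_suml. Qed.

Lemma dual_basis_unique (s : 'I_n -> R -> R) (psi chi : 'I_n -> Omega) :
  der_free s -> dual_basis d s psi -> (forall f, d f = \sum_p s p f *: chi p) ->
  forall p, chi p = psi p.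
Proof.
move=> s_free [[psi_span psi_free] d_psi] d_chi.
have /fin_all_exists [c chiE] : forall p, exists c : 'I_n -> R, chi p = \sum_r c r *: psi r.
  by move=> p; apply: psi_span.
have c_col f r : \sum_p s p f * c p r = s r f.
  apply/eqP; rewrite -subr_eq0; apply/eqP; move: r; apply: psi_free.
  under eq_bigr => r _ do rewrite scalerBl.
  rewrite sumrB -sum_scale_comb -d_psi; under eq_bigr => p _ do rewrite -chiE.
  by rewrite -d_chi subrr.
have c_delta p r : c p r = (p == r)%:R.
  apply/eqP; rewrite -subr_eq0; apply/eqP; move: p.
  apply: (s_free (fun p => c p r - (p == r)%:R)) => f.
  under eq_bigr => p _ do rewrite mulrBl mulrC.
  rewrite sumrB c_col (bigD1 r) //= eqxx mul1r big1 ?addr0 ?subrr // => p /negbTE ->.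
  by rewrite mul0r.
move=> p; rewrite chiE (bigD1 p) //= c_delta eqxx scale1r big1 ?addr0 // => r.
by rewrite c_delta eq_sym => /negbTE ->; rewrite scale0r.
Qed.

Lemma dual_basis_change (s : 'I_n -> R -> R) (G : 'M[R]_n) (psi psi' : 'I_n -> Omega) :
  der_free s -> dual_basis d s psi ->
  (forall f, d f = \sum_t der_change G s t f *: psi' t) ->
  forall p, psi p = \sum_t G t p *: psi' t.
Proof.
move=> s_free dual_psi d_psi' p; symmetry; move: p.
apply: (dual_basis_unique s_free dual_psi) => f.
rewrite d_psi' sum_scale_comb /der_change; apply: eq_bigr => t _.
by congr (_ *: _); apply: eq_bigr => p _; rewrite mulrC.
Qed.

End DualBases.

Section FrameChange.
Variables (k : comUnitRingType) (R : comUnitAlgType k).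
Variables (Omega : lmodType R) (d : R -> Omega) (n m : nat).
Variables (tau : 'I_n -> R -> R) (g g' : 'M[R]_n) (A A' : 'M[R]_m).
Variables (omega omega' omega'' : 'I_n -> Omega).
Hypotheses (tau_der : forall j, is_der (tau j)) (tau_free : der_free tau).
Hypothesis g_unit : g \in unitmx.
Hypotheses (dual : dual_basis d tau omega) (dual' : dual_basis d (der_change g tau) omega').
Hypothesis dual'' : dual_basis d (der_change g' (der_change g tau)) omega''.

Local Notation tau' := (der_change g tau).
Local Notation tau'' := (der_change g' tau').

Lemma tau''_der t : is_der (tau'' t).
Proof. by apply: is_der_change => j; apply: is_der_change. Qed.

Lemma omega_frame'' r : omega r = \sum_t (g' *m g) t r *: omega'' t.
Proof.
by apply: (dual_basis_change tau_free dual) => f; rewrite -der_change_mul; apply: dual''.2.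
Qed.

Lemma omega'_frame'' p : omega' p = \sum_t g' t p *: omega'' t.
Proof. exact: (dual_basis_change (der_change_free g_unit tau_free) dual' dual''.2). Qed.

Lemma omega_comb_frame'' (c : 'I_n -> R) :
  \sum_r c r *: omega r = \sum_t (\sum_r c r * (g' *m g) t r) *: omega'' t.
Proof. by under eq_bigr => r _ do rewrite omega_frame''; rewrite sum_scale_comb. Qed.

Lemma d_comb_frame'' (I : finType) (c : I -> R) (f : I -> R) :
  \sum_x c x *: d (f x) = \sum_t (\sum_x c x * tau'' t (f x)) *: omega'' t.
Proof. by under eq_bigr => x _ do rewrite dual''.2; rewrite sum_scale_comb. Qed.

Variable i : 'I_n.

Lemma hg'_dg'_frame'' :
  \sum_p \sum_r (g' i p * Hcoef tau g A p r) *: omega r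
  + \sum_p \sum_(mu < m) Gcoef tau g A p mu mu *: d (g' i p)
  = \sum_t Hform (tau'' t) (tau'' i) A *: omega'' t.
Proof.
under eq_bigr => p _ do rewrite omega_comb_frame''.
under [X in _ + X]eq_bigr => p _ do rewrite -scaler_suml Gcoef_trace.
rewrite sum_comb d_comb_frame'' -big_split; apply: eq_bigr => t _.
rewrite /= -scalerDl -(Hform_changer _ _ _ _ (tau''_der t)) big_split.
congr ((_ + _) *: _); apply: eq_bigr => p _.
rewrite der_change_mul -Hform_changel mulr_sumr; apply: eq_bigr => r _.
by rewrite Hcoef_Hform -mulrA [Hform _ _ _ * _]mulrC.
Qed.

Lemma g'A_dinvA_frame'' :
  \sum_(al < m) \sum_(ga < m) \sum_(be < m)
     (Gcoef tau' g' A' i al ga * A ga be) *: d (invmx A be al)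
  = \sum_t \tr (logder (tau'' i) A' *m A *m map_mx (tau'' t) (invmx A)) *: omega'' t.
Proof.
under eq_bigr => al _ do under eq_bigr => ga _ do rewrite d_comb_frame''.
under eq_bigr => al _ do rewrite sum_comb.
rewrite sum_comb; apply: eq_bigr => t _; congr (_ *: _); apply: eq_bigr => al _.
rewrite mxE; under [RHS]eq_bigr => be _ do rewrite !mxE big_distrl.
rewrite [RHS]exchange_big; apply: eq_bigr => ga _; apply: eq_bigr => be _.
by rewrite Gcoef_logder.
Qed.

Lemma h'_frame'' :
  \sum_p Hcoef tau' g' A' i p *: omega' p = \sum_t Hform (tau'' t) (tau'' i) A' *: omega'' t.
Proof.
under eq_bigr => p _ do rewrite omega'_frame''.
rewrite sum_scale_comb; apply: eq_bigr => t _; rewrite -Hform_changel.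
by congr (_ *: _); apply: eq_bigr => p _; rewrite Hcoef_Hform mulrC.
Qed.

Lemma h''_frame'' :
  \sum_r Hcoef tau (g' *m g) (A' *m A) i r *: omega r
  = \sum_t Hform (tau'' t) (tau'' i) (A' *m A) *: omega'' t.
Proof.
rewrite omega_comb_frame''; apply: eq_bigr => t _; rewrite der_change_mul -Hform_changel.
by congr (_ *: _); apply: eq_bigr => r _; rewrite Hcoef_Hform mulrC.
Qed.

End FrameChange.

Theorem lemma5p5 (k : comUnitRingType) (R : comUnitAlgType k)
    (Omega : lmodType R) (d : R -> Omega) (n m : nat)
    (tau : 'I_n -> R -> R) (omega omega' omega'' : 'I_n -> Omega)
    (g g' : 'M[R]_n) (A A' : 'M[R]_m) :
  (2%:R : k) \is a GRing.unit ->
  is_kahler d ->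
  der_basis tau -> commuting tau ->
  dual_basis d tau omega ->
  g \in unitmx -> g' \in unitmx ->
  commuting (der_change g tau) ->
  commuting (der_change g' (der_change g tau)) ->
  dual_basis d (der_change g tau) omega' ->
  dual_basis d (der_change g' (der_change g tau)) omega'' ->
  A \in unitmx -> A' \in unitmx ->
  let tau' := der_change g tau in
  let tau'' := der_change g' tau' in
  let h := Hcoef tau g A in
  let h' := Hcoef tau' g' A' in
  let h'' := Hcoef tau (g' *m g) (A' *m A) in
  let gG := Gcoef tau g A in
  let g'G := Gcoef tau' g' A' in
  forall i : 'I_n,
    \sum_(p < n) \sum_(r < n) (g' i p * h p r) *: omega r
    + \sum_(p < n) \sum_(mu < m) gG p mu mu *: d (g' i p)
    + \sum_(al < m) \sum_(ga < m) \sum_(be < m)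
        (g'G i al ga * A ga be) *: d (invmx A be al)
    + \sum_(p < n) h' i p *: omega' p
    - \sum_(r < n) h'' i r *: omega r
  = \sum_(r < n)
      ((2%:R)^-1 * \tr (invmx A' *m map_mx (tau'' i) A' *m map_mx (tau'' r) A *m invmx A
                        - invmx A' *m map_mx (tau'' r) A' *m map_mx (tau'' i) A *m invmx A))
      *: omega'' r.
Proof.
move=> two_unit _ [tau_der _ tau_free] _ dual g_unit _ _ _ dual' dual'' A_unit A'_unit.
move=> tau' tau'' h h' h'' gG g'G i; rewrite /h /h' /h'' /gG /g'G /tau'' /tau'.
rewrite (hg'_dg'_frame'' A tau_der tau_free dual dual'') (g'A_dinvA_frame'' A A' dual'').
rewrite (h'_frame'' A' tau_free g_unit dual' dual'') (h''_frame'' A A' tau_free dual dual'').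
rewrite -!big_split -sumrB; apply: eq_bigr => t _.
have two_unitR : (2%:R : R) \is a GRing.unit.
  by rewrite -(rmorph_nat (in_alg R)) rmorph_unit.
by rewrite /= -!scalerDl -scalerBl Hform_cocycle_defect //; apply: tau''_der.
Qed.
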